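(* For every $v\in\{0,\dots,n-1\}$, every $\pi\in\Pi$ and every $f\in\mathcal F$, $$\sum_{e\in\mathcal E_v^+}\sigma_e H_e(f,\pi)\le -V^+_v(f,\pi)+V^-_v(f,\pi).$$
   Context: $\mathcal G=(\mathcal V,\mathcal E)$ is a finite directed graph with $\mathcal V=\{0,1,\dots,n\}$, containing no directed cycle, in which node $0$ is the unique node with no incoming link, node $n$ is the unique node with no outgoing link, there is a directed path from every node to $n$, and every link $(u,v)\in\mathcal E$ satisfies $u<v$. For $v\in\mathcal V$, $\mathcal E_v^-$ and $\mathcal E_v^+$ are the sets of links entering and leaving $v$. Each link $e$ has a capacity $C_e\in(0,+\infty]$; $\mathcal F_v:=\prod_{e\in\mathcal E_v^+}[0,C_e)$, $\mathcal F:=\prod_{e\in\mathcal E}[0,C_e)$. $\mathcal P$ is the set of directed paths from $0$ to $n$, $A$ the link-path incidence matrix ($A_{ep}=1$ iff $e\in p$), $\mathcal S(\cdot)$ denotes a probability simplex, $\Pi:=\{\pi\in\mathcal S(\mathcal P):(A\pi)_e<C_e\ \forall e\}$, and $f^\pi:=A\pi$. For each $v\in\{0,\dots,n-1\}$ a continuously differentiable $G^v:\mathcal F_v\times\Pi\to\mathcal S(\mathcal E_v^+)$ is given such that (consistency) $(\sum_{j\in\mathcal E_v^+}f^\pi_j)\,G^v_e(f^\pi_{\mathcal E_v^+},\pi)=f^\pi_e$ for all $\pi\in\Pi$, $e\in\mathcal E_v^+$, where $f^\pi_{\mathcal E_v^+}=(f^\pi_j)_{j\in\mathcal E_v^+}$;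 and (cooperativity) $\partial G^v_j(f_{\mathcal E_v^+},\pi)/\partial f_e\ge0$ for all $\pi\in\Pi$, $f_{\mathcal E_v^+}\in\mathcal F_v$, $j\neq e\in\mathcal E_v^+$. For $f\in\mathcal F$, $\pi\in\Pi$, $e\in\mathcal E_v^+$: $H_e(f,\pi):=G^v_e(f_{\mathcal E_v^+},\pi)-f_e$ if $v=0$, and $H_e(f,\pi):=(\sum_{j\in\mathcal E_v^-}f_j)G^v_e(f_{\mathcal E_v^+},\pi)-f_e$ if $1\le v<n$. Notation: $\sigma_e:=\mathrm{sgn}(f_e-f^\pi_e)$ with $\mathrm{sgn}(0)=0$; $\lambda^\pi_v:=\sum_{e\in\mathcal E_v^+}f^\pi_e$; $\lambda^-_v:=\sum_{e\in\mathcal E_v^-}f_e$; $V^+_v(f,\pi):=\sum_{e\in\mathcal E_v^+}|f_e-f^\pi_e|$; $V^-_v(f,\pi):=|\lambda^\pi_v-\lambda^-_v|$ for $1\le v\le n$ and $V^-_0(f,\pi):=0$. *)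

From Stdlib Require Import Reals List Lra.
Import ListNotations.
Open Scope R_scope.

(* Nodes are natural numbers 0..n; a link is a pair (tail, head). *)
Definition edge := (nat * nat)%type.
Definition path := list edge.

Definition sumR {A : Type} (l : list A) (g : A -> R) : R :=
  fold_right (fun a acc => g a + acc) 0 l.

Definition edge_eqb (e e' : edge) : bool :=
  Nat.eqb (fst e) (fst e') && Nat.eqb (snd e) (snd e').

Definition out_edges (E : list edge) (v : nat) : list edge :=
  filter (fun e => Nat.eqb (fst e) v) E.
Definition in_edges (E : list edge) (v : nat) : list edge :=
  filter (fun e => Nat.eqb (snd e) v) E.

Inductive dpath (E : list edge) : nat -> nat -> path -> Prop :=
| dp_nil : forall u, dpath E u u nil
| dp_cons : forall u w x p, In (u, w) E -> dpath E w x p -> dpath E u x ((u, w) :: p).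

Definition network (n : nat) (E : list edge) : Prop :=
  NoDup E /\
  (forall u v, In (u, v) E -> (u < v)%nat /\ (v <= n)%nat) /\
  (forall v, (1 <= v <= n)%nat -> exists u, In (u, v) E) /\
  (forall v, (v < n)%nat -> exists w, In (v, w) E) /\
  (forall v, (v <= n)%nat -> exists p, dpath E v n p).

(* Capacities in (0, +oo]; None encodes +oo. *)
Definition below_cap (x : R) (c : option R) : Prop :=
  match c with Some c => x < c | None => True end.
Definition cap_pos (E : list edge) (C : edge -> option R) : Prop :=
  forall e, In e E -> match C e with Some c => 0 < c | None => True end.

Definition paths_enum (n : nat) (E : list edge) (Ps : list path) : Prop :=
  NoDup Ps /\ forall p, In p Ps <-> dpath E 0 n p.

Definition flow (Ps : list path) (pi : path -> R) (e : edge) : R :=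
  sumR Ps (fun p => if existsb (edge_eqb e) p then pi p else 0).

Definition in_Pi (E : list edge) (C : edge -> option R) (Ps : list path)
    (pi : path -> R) : Prop :=
  (forall p, ~ In p Ps -> pi p = 0) /\
  (forall p, In p Ps -> 0 <= pi p) /\
  sumR Ps pi = 1 /\
  (forall e, In e E -> below_cap (flow Ps pi e) (C e)).

(* f in F_v and f in F (only the values on the relevant links matter) *)
Definition in_Fv (E : list edge) (C : edge -> option R) (v : nat) (f : edge -> R) : Prop :=
  forall e, In e (out_edges E v) -> 0 <= f e /\ below_cap (f e) (C e).
Definition in_F (E : list edge) (C : edge -> option R) (f : edge -> R) : Prop :=
  forall e, In e E -> 0 <= f e /\ below_cap (f e) (C e).

(* ---------- the maps G^v : F_v x Pi -> S(E_v^+) ----------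
   G v f pi e  stands for  G^v_e(f_{E_v^+}, pi). *)
Definition Gmap := nat -> (edge -> R) -> (path -> R) -> edge -> R.

Definition G_local (n : nat) (E : list edge) (G : Gmap) : Prop :=
  forall v, (v < n)%nat -> forall f g pi,
    (forall e, In e (out_edges E v) -> f e = g e) ->
    forall j, G v f pi j = G v g pi j.

Definition G_simplex (n : nat) (E : list edge) (C : edge -> option R)
    (Ps : list path) (G : Gmap) : Prop :=
  forall v, (v < n)%nat -> forall f pi, in_Fv E C v f -> in_Pi E C Ps pi ->
    (forall e, In e (out_edges E v) -> 0 <= G v f pi e) /\
    sumR (out_edges E v) (G v f pi) = 1.

Definition G_consistent (n : nat) (E : list edge) (C : edge -> option R)
    (Ps : list path) (G : Gmap) : Prop :=
  forall v, (v < n)%nat -> forall pi, in_Pi E C Ps pi ->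
    forall e, In e (out_edges E v) ->
      sumR (out_edges E v) (flow Ps pi) * G v (flow Ps pi) pi e = flow Ps pi e.

(* Continuous differentiability of a scalar map phi(f_{Ev}, pi_{Ps}) on a
   (not necessarily open) domain D, in the Frechet sense relative to D, with
   continuous derivative coefficients da (w.r.t. f_e) and db (w.r.t. pi_p). *)
Definition dist (Ev : list edge) (Ps : list path) (f : edge -> R) (pi : path -> R)
    (f' : edge -> R) (pi' : path -> R) : R :=
  sumR Ev (fun e => Rabs (f' e - f e)) + sumR Ps (fun p => Rabs (pi' p - pi p)).

Definition lin (Ev : list edge) (Ps : list path) (a : edge -> R) (b : path -> R)
    (f : edge -> R) (pi : path -> R) (f' : edge -> R) (pi' : path -> R) : R :=
  sumR Ev (fun e => a e * (f' e - f e)) + sumR Ps (fun p => b p * (pi' p - pi p)).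

Definition C1_on (Ev : list edge) (Ps : list path)
    (D : (edge -> R) -> (path -> R) -> Prop)
    (phi : (edge -> R) -> (path -> R) -> R)
    (da : (edge -> R) -> (path -> R) -> edge -> R)
    (db : (edge -> R) -> (path -> R) -> path -> R) : Prop :=
  (forall f pi, D f pi -> forall eps, 0 < eps -> exists delta, 0 < delta /\
     forall f' pi', D f' pi' -> dist Ev Ps f pi f' pi' < delta ->
       Rabs (phi f' pi' - phi f pi - lin Ev Ps (da f pi) (db f pi) f pi f' pi')
         <= eps * dist Ev Ps f pi f' pi') /\
  (forall f pi, D f pi -> forall eps, 0 < eps -> exists delta, 0 < delta /\
     forall f' pi', D f' pi' -> dist Ev Ps f pi f' pi' < delta ->
       (forall e, In e Ev -> Rabs (da f' pi' e - da f pi e) < eps) /\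
       (forall p, In p Ps -> Rabs (db f' pi' p - db f pi p) < eps)).

Definition G_C1_coop (n : nat) (E : list edge) (C : edge -> option R)
    (Ps : list path) (G : Gmap) : Prop :=
  forall v, (v < n)%nat ->
    exists (da : edge -> (edge -> R) -> (path -> R) -> edge -> R)
           (db : edge -> (edge -> R) -> (path -> R) -> path -> R),
      (forall j, In j (out_edges E v) ->
         C1_on (out_edges E v) Ps (fun f pi => in_Fv E C v f /\ in_Pi E C Ps pi)
               (fun f pi => G v f pi j) (da j) (db j)) /\
      (forall j e, In j (out_edges E v) -> In e (out_edges E v) -> j <> e ->
         forall f pi, in_Fv E C v f -> in_Pi E C Ps pi -> 0 <= da j f pi e).

Definition H (E : list edge) (G : Gmap) (v : nat) (f : edge -> R) (pi : path -> R)
    (e : edge) : R :=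
  if Nat.eqb v 0 then G v f pi e - f e
  else sumR (in_edges E v) f * G v f pi e - f e.

Definition sgn (x : R) : R :=
  if Rlt_dec 0 x then 1 else if Rlt_dec x 0 then -1 else 0.

Definition Vplus (E : list edge) (Ps : list path) (v : nat) (f : edge -> R)
    (pi : path -> R) : R :=
  sumR (out_edges E v) (fun e => Rabs (f e - flow Ps pi e)).

Definition Vminus (E : list edge) (Ps : list path) (v : nat) (f : edge -> R)
    (pi : path -> R) : R :=
  if Nat.eqb v 0 then 0
  else Rabs (sumR (out_edges E v) (flow Ps pi) - sumR (in_edges E v) f).

(* Put y := f^pi.  Consistency gives y_e = lambda^pi_v G^v_e(y), hence
     sum_e sigma_e H_e = lambda^-_v sum_e sigma_e (G^v_e(f) - G^v_e(y))
                       + (lambda^-_v - lambda^pi_v) sum_e sigma_e G^v_e(y) - V^+_v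
   (at v = 0 read lambda^-_0 = lambda^pi_0 = 1, the latter because every path leaves 0 once).
   The middle term is at most V^-_v since G^v(y) lies in the simplex.  The first term is
   nonpositive: along the segment from y to f the derivative of t |-> sum_e sigma_e G^v_e is
   sum_j sigma_j sum_e (dG^v_j/df_e) (f_e - y_e), and that Jacobian has nonnegative
   off-diagonal entries (cooperativity) and zero column sums (G^v sums to 1). *)

From Pilot Require Import Defs.
From Stdlib Require Import Reals List Lra Lia Classical FunctionalExtensionality.
Open Scope R_scope.

Section ListSums.
Context {A : Type}.

Lemma sumR_cons (a : A) l g : sumR (a :: l) g = g a + sumR l g.
Proof. reflexivity. Qed.

Lemma sumR_ext (l : list A) g h :
  (forall a, In a l -> g a = h a) -> sumR l g = sumR l h.
Proof.
  induction l as [|a l IH]; intros Hgh; [reflexivity|].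
  rewrite !sumR_cons, (Hgh a), IH; [reflexivity | | left; reflexivity].
  intros b Hb; apply Hgh; right; exact Hb.
Qed.

Lemma sumR_plus (l : list A) g h :
  sumR l (fun a => g a + h a) = sumR l g + sumR l h.
Proof. induction l as [|a l IH]; rewrite ?sumR_cons, ?IH; simpl; lra. Qed.

Lemma sumR_minus (l : list A) g h :
  sumR l (fun a => g a - h a) = sumR l g - sumR l h.
Proof. induction l as [|a l IH]; rewrite ?sumR_cons, ?IH; simpl; lra. Qed.

Lemma sumR_scal (l : list A) c g : sumR l (fun a => c * g a) = c * sumR l g.
Proof. induction l as [|a l IH]; rewrite ?sumR_cons, ?IH; simpl; lra. Qed.

Lemma sumR_const (l : list A) c : sumR l (fun _ => c) = INR (length l) * c.
Proof.
  induction l as [|a l IH]; [simpl; lra|].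
  rewrite sumR_cons, IH; simpl length; rewrite S_INR; lra.
Qed.

Lemma sumR_zero (l : list A) : sumR l (fun _ => 0) = 0.
Proof. rewrite sumR_const; lra. Qed.

Lemma sumR_le (l : list A) g h :
  (forall a, In a l -> g a <= h a) -> sumR l g <= sumR l h.
Proof.
  induction l as [|a l IH]; intros Hgh; rewrite ?sumR_cons; [simpl; lra|].
  apply Rplus_le_compat; [apply Hgh; left; reflexivity|].
  apply IH; intros b Hb; apply Hgh; right; exact Hb.
Qed.

Lemma sumR_nonneg (l : list A) g : (forall a, In a l -> 0 <= g a) -> 0 <= sumR l g.
Proof. intros Hg; rewrite <- (sumR_zero l); apply sumR_le; exact Hg. Qed.

Lemma Rabs_sumR_le (l : list A) g : Rabs (sumR l g) <= sumR l (fun a => Rabs (g a)).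
Proof.
  induction l as [|a l IH]; rewrite ?sumR_cons; [simpl; rewrite Rabs_R0; lra|].
  eapply Rle_trans; [apply Rabs_triang | lra].
Qed.

Lemma sumR_indicator (eqb : A -> A -> bool) (l : list A) a c :
  (forall x y, eqb x y = true <-> x = y) -> NoDup l -> In a l ->
  sumR l (fun x => if eqb x a then c else 0) = c.
Proof.
  intros Heqb Hnd Ha; induction Hnd as [|x l Hx Hnd IH]; [destruct Ha|].
  rewrite sumR_cons; destruct (eqb x a) eqn:Exa.
  - apply Heqb in Exa; subst x.
    rewrite (sumR_ext _ _ (fun _ => 0)), sumR_zero; [lra|].
    intros y Hy; destruct (eqb y a) eqn:Eya; [apply Heqb in Eya; subst; contradiction | reflexivity].
  - destruct Ha as [-> | Ha].
    + assert (eqb a a = true) by (apply Heqb; reflexivity); congruence.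
    + rewrite IH by exact Ha; lra.
Qed.

End ListSums.

Lemma sumR_comm {A B : Type} (l1 : list A) (l2 : list B) h :
  sumR l1 (fun a => sumR l2 (h a)) = sumR l2 (fun b => sumR l1 (fun a => h a b)).
Proof.
  induction l1 as [|a l1 IH].
  - symmetry; apply sumR_zero.
  - rewrite sumR_cons, IH, <- sumR_plus; reflexivity.
Qed.

Lemma sgn_mul_self x : sgn x * x = Rabs x.
Proof.
  unfold sgn; destruct (Rlt_dec 0 x); [rewrite Rabs_right; lra|].
  destruct (Rlt_dec x 0); [rewrite Rabs_left; lra|].
  replace x with 0 by lra; rewrite Rabs_R0; lra.
Qed.

Lemma sgn_bounds x : -1 <= sgn x <= 1.
Proof. unfold sgn; destruct (Rlt_dec 0 x); [|destruct (Rlt_dec x 0)]; lra. Qed.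

Lemma Rabs_sgn_le_1 x : Rabs (sgn x) <= 1.
Proof. apply Rabs_le, sgn_bounds. Qed.

Lemma sgn_mul_sgn_self x : x <> 0 -> sgn x * sgn x = 1.
Proof. intros Hx; unfold sgn; destruct (Rlt_dec 0 x); [|destruct (Rlt_dec x 0)]; lra. Qed.

Lemma Rabs_mul_sgn x : Rabs x * sgn x = x.
Proof.
  unfold sgn; destruct (Rlt_dec 0 x); [rewrite Rabs_right; lra|].
  destruct (Rlt_dec x 0); [rewrite Rabs_left; lra|].
  replace x with 0 by lra; rewrite Rabs_R0; lra.
Qed.

Definition deriv_within (I : R -> Prop) (phi : R -> R) (t d : R) : Prop :=
  forall eps, 0 < eps -> exists del, 0 < del /\
    forall s, I s -> Rabs (s - t) < del ->
      Rabs (phi s - phi t - d * (s - t)) <= eps * Rabs (s - t).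

Section DerivWithin.
Variable I : R -> Prop.

Lemma deriv_within_const c t : deriv_within I (fun _ => c) t 0.
Proof.
  intros eps Heps; exists 1; split; [lra|]; intros s _ _.
  replace (c - c - 0 * (s - t)) with 0 by ring; rewrite Rabs_R0.
  apply Rmult_le_pos; [lra | apply Rabs_pos].
Qed.

Lemma deriv_within_plus phi psi t d d' :
  deriv_within I phi t d -> deriv_within I psi t d' ->
  deriv_within I (fun s => phi s + psi s) t (d + d').
Proof.
  intros Hphi Hpsi eps Heps.
  destruct (Hphi (eps / 2)) as [del1 [Hdel1 H1]]; [lra|].
  destruct (Hpsi (eps / 2)) as [del2 [Hdel2 H2]]; [lra|].
  exists (Rmin del1 del2); split; [apply Rmin_glb_lt; lra|]; intros s Hs Hst.
  specialize (H1 s Hs (Rlt_le_trans _ _ _ Hst (Rmin_l _ _))).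
  specialize (H2 s Hs (Rlt_le_trans _ _ _ Hst (Rmin_r _ _))).
  replace (phi s + psi s - (phi t + psi t) - (d + d') * (s - t)) with
    ((phi s - phi t - d * (s - t)) + (psi s - psi t - d' * (s - t))) by ring.
  eapply Rle_trans; [apply Rabs_triang | lra].
Qed.

Lemma deriv_within_scal c phi t d :
  deriv_within I phi t d -> deriv_within I (fun s => c * phi s) t (c * d).
Proof.
  intros Hphi eps Heps.
  destruct (Hphi (eps / (Rabs c + 1))) as [del [Hdel Hb]].
  { apply Rdiv_lt_0_compat; [lra | pose proof (Rabs_pos c); lra]. }
  exists del; split; [exact Hdel|]; intros s Hs Hst.
  specialize (Hb s Hs Hst).
  replace (c * phi s - c * phi t - c * d * (s - t)) with (c * (phi s - phi t - d * (s - t))) by ring.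
  rewrite Rabs_mult.
  assert (Hc : Rabs c * (eps / (Rabs c + 1)) <= eps).
  { pose proof (Rabs_pos c).
    replace (Rabs c * (eps / (Rabs c + 1))) with (eps * (Rabs c / (Rabs c + 1))) by (field; lra).
    assert (Rabs c / (Rabs c + 1) <= 1).
    { apply (Rmult_le_reg_r (Rabs c + 1)); [lra|].
      unfold Rdiv; rewrite Rmult_assoc, Rinv_l; lra. }
    nra. }
  pose proof (Rabs_pos c); pose proof (Rabs_pos (s - t)).
  pose proof (Rabs_pos (phi s - phi t - d * (s - t))); nra.
Qed.

Lemma deriv_within_sumR {A : Type} (l : list A) (F : A -> R -> R) (dF : A -> R) t :
  (forall a, In a l -> deriv_within I (F a) t (dF a)) ->
  deriv_within I (fun s => sumR l (fun a => F a s)) t (sumR l dF).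
Proof.
  induction l as [|a l IH]; intros HF.
  - exact (deriv_within_const 0 t).
  - apply (deriv_within_plus (F a) (fun s => sumR l (fun b => F b s))); [apply HF; left; reflexivity|].
    apply IH; intros b Hb; apply HF; right; exact Hb.
Qed.

Lemma deriv_within_const_on_eq0 phi t d :
  (forall s, I s -> phi s = phi t) ->
  (forall del, 0 < del -> exists s, I s /\ s <> t /\ Rabs (s - t) < del) ->
  deriv_within I phi t d -> d = 0.
Proof.
  intros Hconst Hacc Hd; apply NNPP; intros Hd0.
  destruct (Hd (Rabs d / 2)) as [del [Hdel Hb]]; [apply Rdiv_lt_0_compat; [apply Rabs_pos_lt|]; lra|].
  destruct (Hacc del Hdel) as [s [Hs [Hst Hsd]]].
  specialize (Hb s Hs Hsd); rewrite (Hconst s Hs) in Hb.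
  replace (phi t - phi t - d * (s - t)) with (- (d * (s - t))) in Hb by ring.
  rewrite Rabs_Ropp, Rabs_mult in Hb.
  assert (0 < Rabs (s - t)) by (apply Rabs_pos_lt; lra).
  assert (0 < Rabs d) by (apply Rabs_pos_lt; exact Hd0).
  nra.
Qed.

End DerivWithin.

Lemma locally_nonincreasing_le (psi : R -> R) a b : a <= b ->
  (forall t, a <= t <= b -> exists del, 0 < del /\
     forall s, a <= s <= b -> Rabs (s - t) < del ->
       (t <= s -> psi s <= psi t) /\ (s <= t -> psi t <= psi s)) ->
  psi b <= psi a.
Proof.
  intros Hab Hloc.
  set (S := fun t => a <= t <= b /\ forall u, a <= u <= t -> psi u <= psi a).
  assert (HaS : S a).
  { split; [lra|]; intros u Hu; replace u with a by lra; lra. }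
  destruct (completeness S) as [m [Hub Hlub]].
  { exists b; intros x [Hx _]; lra. }
  { exists a; exact HaS. }
  assert (Ham : a <= m) by (apply Hub; exact HaS).
  assert (Hmb : m <= b) by (apply Hlub; intros x [Hx _]; lra).
  assert (Happrox : forall c, c < m -> exists t, S t /\ c < t).
  { intros c Hcm; apply NNPP; intros Hno.
    assert (m <= c); [|lra].
    apply Hlub; intros x Hx; apply Rnot_lt_le; intros Hcx; apply Hno; exists x; auto. }
  destruct (Hloc m (conj Ham Hmb)) as [del [Hdel Hm]].
  assert (HmS : S m).
  { split; [lra|]; intros u Hu.
    destruct (Rlt_dec u m) as [Hum | Hum].
    - destruct (Happrox u Hum) as [t [[_ Ht] Hut]]; apply Ht; lra.
    - replace u with m by lra.
      destruct (Happrox (m - del)) as [t [[Ht Hta] Htm]]; [lra|].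
      assert (t <= m) by (apply Hub; split; assumption).
      apply Rle_trans with (psi t); [|apply Hta; lra].
      apply (Hm t); [lra | rewrite Rabs_left1; lra | lra]. }
  destruct (Rlt_dec m b) as [Hmb' | Hmb'].
  - assert (Hs : m < Rmin b (m + del / 2)) by (apply Rmin_glb_lt; lra).
    pose proof (Rmin_l b (m + del / 2)); pose proof (Rmin_r b (m + del / 2)).
    assert (HsS : S (Rmin b (m + del / 2))).
    { split; [lra|]; intros u Hu.
      destruct (Rle_dec u m) as [Hum | Hum]; [apply (proj2 HmS); lra|].
      apply Rle_trans with (psi m); [|apply (proj2 HmS); lra].
      apply (Hm u); [lra | rewrite Rabs_right; lra | lra]. }
    pose proof (Hub _ HsS); lra.
  - replace b with m by lra; apply (proj2 HmS); lra.
Qed.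

Lemma le_of_deriv_within_nonpos (phi dphi : R -> R) a b : a <= b ->
  (forall t, a <= t <= b -> dphi t <= 0) ->
  (forall t, a <= t <= b -> deriv_within (fun s => a <= s <= b) phi t (dphi t)) ->
  phi b <= phi a.
Proof.
  intros Hab Hneg Hder.
  assert (Heps : forall eps, 0 < eps -> phi b - eps * b <= phi a - eps * a).
  { intros eps Heps; apply (locally_nonincreasing_le (fun s => phi s - eps * s)); [exact Hab|].
    intros t Ht; destruct (Hder t Ht eps Heps) as [del [Hdel Hb]].
    exists del; split; [exact Hdel|]; intros s Hs Hst.
    specialize (Hb s Hs Hst); specialize (Hneg t Ht).
    split; intros Hts.
    - rewrite (Rabs_right (s - t)) in Hb by lra.
      pose proof (Rle_abs (phi s - phi t - dphi t * (s - t))).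
      assert (dphi t * (s - t) <= 0) by nra; lra.
    - rewrite (Rabs_left1 (s - t)) in Hb by lra.
      pose proof (Rle_abs (- (phi s - phi t - dphi t * (s - t)))); rewrite Rabs_Ropp in *.
      assert (0 <= dphi t * (s - t)) by nra; lra. }
  apply Rnot_lt_le; intros Hlt.
  specialize (Heps ((phi b - phi a) / (2 * (b - a + 1)))).
  assert (Hpos : 0 < (phi b - phi a) / (2 * (b - a + 1))) by (apply Rdiv_lt_0_compat; lra).
  specialize (Heps Hpos).
  assert (Hsmall : (phi b - phi a) / (2 * (b - a + 1)) * (b - a) < phi b - phi a).
  { apply (Rmult_lt_reg_r (2 * (b - a + 1))); [lra|].
    unfold Rdiv; replace ((phi b - phi a) * / (2 * (b - a + 1)) * (b - a) * (2 * (b - a + 1)))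
      with ((phi b - phi a) * (b - a) * (/ (2 * (b - a + 1)) * (2 * (b - a + 1)))) by ring.
    rewrite Rinv_l by lra; nra. }
  nra.
Qed.

(* A Metzler matrix with zero column sums generates a flow that is nonexpansive in l1. *)
Lemma sum_sgn_metzler_nonpos {A : Type} (l : list A) (M : A -> A -> R) (d : A -> R) :
  (forall j e, In j l -> In e l -> j <> e -> 0 <= M j e) ->
  (forall e, In e l -> sumR l (fun j => M j e) = 0) ->
  sumR l (fun j => sgn (d j) * sumR l (fun e => M j e * d e)) <= 0.
Proof.
  intros Hoff Hcol.
  rewrite (sumR_ext _ _ (fun j => sumR l (fun e => sgn (d j) * M j e * d e)))
    by (intros j _; rewrite <- sumR_scal; apply sumR_ext; intros; ring).
  rewrite sumR_comm, <- (sumR_zero l); apply sumR_le; intros e He.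
  apply Rle_trans with (sumR l (fun j => Rabs (d e) * M j e));
    [| rewrite sumR_scal, (Hcol e He); lra].
  apply sumR_le; intros j Hj.
  rewrite <- (Rabs_mul_sgn (d e)) at 1.
  destruct (classic (j = e)) as [-> | Hje].
  - destruct (Req_dec (d e) 0) as [Hz | Hnz].
    + rewrite Hz, Rabs_R0; lra.
    + replace (sgn (d e) * M e e * (Rabs (d e) * sgn (d e)))
        with (Rabs (d e) * M e e * (sgn (d e) * sgn (d e))) by ring.
      rewrite sgn_mul_sgn_self by exact Hnz; lra.
  - pose proof (Hoff j e Hj He Hje); pose proof (Rabs_pos (d e)).
    pose proof (sgn_bounds (d j)); pose proof (sgn_bounds (d e)).
    assert (sgn (d j) * sgn (d e) <= 1) by nra.
    replace (sgn (d j) * M j e * (Rabs (d e) * sgn (d e)))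
      with (Rabs (d e) * M j e * (sgn (d j) * sgn (d e))) by ring.
    assert (0 <= Rabs (d e) * M j e) by nra; nra.
Qed.

Definition line (g w : edge -> R) (s : R) : edge -> R := fun e => g e + s * w e.

Lemma line_0 g w : line g w 0 = g.
Proof. apply functional_extensionality; intros e; unfold line; ring. Qed.

Lemma line_1 x y : line y (fun e => x e - y e) 1 = x.
Proof. apply functional_extensionality; intros e; unfold line; ring. Qed.

Definition unit_vec (e : edge) : edge -> R := fun e' => if edge_eqb e' e then 1 else 0.

Lemma edge_eqb_spec e e' : edge_eqb e e' = true <-> e = e'.
Proof.
  destruct e as [a b], e' as [c d]; unfold edge_eqb; simpl.
  rewrite Bool.andb_true_iff, !Nat.eqb_eq.
  split; [intros [-> ->]; reflexivity | intros H; inversion H; auto].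
Qed.

Lemma sumR_mul_unit_vec (l : list edge) (a : edge -> R) e :
  NoDup l -> In e l -> sumR l (fun e' => a e' * unit_vec e e') = a e.
Proof.
  intros Hnd He.
  rewrite (sumR_ext _ _ (fun e' => if edge_eqb e' e then a e else 0)).
  - exact (sumR_indicator edge_eqb l e (a e) edge_eqb_spec Hnd He).
  - intros e' _; unfold unit_vec; destruct (edge_eqb e' e) eqn:Ee; [|ring].
    apply edge_eqb_spec in Ee; subst; ring.
Qed.

Section CooperativeSimplexMap.
Variables (Ev : list edge) (Ps : list path) (D : (edge -> R) -> (path -> R) -> Prop)
  (Gj : edge -> (edge -> R) -> (path -> R) -> R)
  (da : edge -> (edge -> R) -> (path -> R) -> edge -> R)
  (db : edge -> (edge -> R) -> (path -> R) -> path -> R) (pi : path -> R).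
Hypothesis HC1 : forall j, In j Ev -> C1_on Ev Ps D (Gj j) (da j) (db j).

Lemma deriv_within_along_line j g w (I : R -> Prop) t :
  In j Ev -> I t -> (forall s, I s -> D (line g w s) pi) ->
  deriv_within I (fun s => Gj j (line g w s) pi) t
    (sumR Ev (fun e => da j (line g w t) pi e * w e)).
Proof.
  intros Hj Ht HD eps Heps.
  set (W := sumR Ev (fun e => Rabs (w e))).
  assert (HW : 0 <= W) by (apply sumR_nonneg; intros; apply Rabs_pos).
  destruct (proj1 (HC1 j Hj) _ pi (HD t Ht) (eps / (W + 1))) as [del [Hdel Hb]].
  { apply Rdiv_lt_0_compat; lra. }
  exists (del / (W + 1)); split; [apply Rdiv_lt_0_compat; lra|]; intros s Hs Hst.
  assert (Hpi0 : forall h : path -> R, sumR Ps (fun p => h p * (pi p - pi p)) = 0)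
    by (intros h; rewrite (sumR_ext _ _ (fun _ => 0)) by (intros; ring); apply sumR_zero).
  assert (Hdist : Defs.dist Ev Ps (line g w t) pi (line g w s) pi = Rabs (s - t) * W).
  { unfold Defs.dist, W; rewrite <- sumR_scal, Rplus_comm.
    rewrite (sumR_ext Ps _ (fun _ => 0)), sumR_zero, Rplus_0_l
      by (intros p _; rewrite Rminus_diag; apply Rabs_R0).
    apply sumR_ext; intros e _; unfold line; rewrite <- Rabs_mult; f_equal; ring. }
  assert (Hlin : lin Ev Ps (da j (line g w t) pi) (db j (line g w t) pi) (line g w t) pi
                   (line g w s) pi = sumR Ev (fun e => da j (line g w t) pi e * w e) * (s - t)).
  { unfold lin; rewrite Hpi0, Rplus_0_r, Rmult_comm, <- sumR_scal.
    apply sumR_ext; intros e _; unfold line; ring. }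
  assert (Hsmall : Rabs (s - t) * W < del).
  { apply Rle_lt_trans with (Rabs (s - t) * (W + 1)); [pose proof (Rabs_pos (s - t)); nra|].
    apply (Rmult_lt_reg_r (/ (W + 1))); [apply Rinv_0_lt_compat; lra|].
    rewrite Rmult_assoc, Rinv_r by lra; lra. }
  rewrite <- Hlin; eapply Rle_trans; [apply Hb; [apply HD, Hs | rewrite Hdist; exact Hsmall]|].
  rewrite Hdist.
  replace (eps / (W + 1) * (Rabs (s - t) * W)) with (eps * Rabs (s - t) * (W / (W + 1)))
    by (field; lra).
  assert (W / (W + 1) <= 1).
  { apply (Rmult_le_reg_r (W + 1)); [lra|].
    unfold Rdiv; rewrite Rmult_assoc, Rinv_l; lra. }
  pose proof (Rabs_pos (s - t)); assert (0 <= eps * Rabs (s - t)) by nra; nra.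
Qed.

Hypothesis Hnd : NoDup Ev.
Hypothesis Hsum : forall f, D f pi -> sumR Ev (fun j => Gj j f pi) = 1.
(* D need not be open: differentiating sum_j G_j = 1 in direction e only needs room to move that way. *)
Hypothesis Hbump : forall f e, D f pi -> In e Ev ->
  exists s0, 0 < s0 /\ forall s, 0 <= s <= s0 -> D (line f (unit_vec e) s) pi.

Lemma jacobian_column_sum_zero f e :
  D f pi -> In e Ev -> sumR Ev (fun j => da j f pi e) = 0.
Proof.
  intros Hf He; destruct (Hbump f e Hf He) as [s0 [Hs0 HD]].
  set (I := fun s => 0 <= s <= s0).
  assert (I0 : I 0) by (unfold I; lra).
  assert (Hder : deriv_within I (fun s => sumR Ev (fun j => Gj j (line f (unit_vec e) s) pi)) 0
                   (sumR Ev (fun j => da j f pi e))).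
  { apply deriv_within_sumR; intros j Hj.
    pose proof (deriv_within_along_line j f (unit_vec e) I 0 Hj I0 HD) as Hj'.
    rewrite line_0, sumR_mul_unit_vec in Hj' by assumption; exact Hj'. }
  apply (deriv_within_const_on_eq0 I _ 0 _ (fun s Hs => eq_trans (Hsum _ (HD s Hs))
                                                  (eq_sym (Hsum _ (HD 0 I0)))));
    [|exact Hder].
  intros del Hdel; exists (Rmin s0 (del / 2)).
  pose proof (Rmin_l s0 (del / 2)); pose proof (Rmin_r s0 (del / 2)).
  assert (0 < Rmin s0 (del / 2)) by (apply Rmin_glb_lt; lra).
  unfold I; rewrite Rminus_0_r, Rabs_right by lra; repeat split; lra.
Qed.

Hypothesis Hcoop : forall j e f, In j Ev -> In e Ev -> j <> e -> D f pi -> 0 <= da j f pi e.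

Lemma sum_sgn_increment_nonpos x y :
  (forall t, 0 <= t <= 1 -> D (line y (fun e => x e - y e) t) pi) ->
  sumR Ev (fun j => sgn (x j - y j) * (Gj j x pi - Gj j y pi)) <= 0.
Proof.
  intros Hseg.
  set (phi := fun t => sumR Ev (fun j => sgn (x j - y j) * Gj j (line y (fun e => x e - y e) t) pi)).
  assert (Hends : sumR Ev (fun j => sgn (x j - y j) * (Gj j x pi - Gj j y pi)) = phi 1 - phi 0).
  { unfold phi; rewrite line_0, line_1, <- sumR_minus; apply sumR_ext; intros; ring. }
  rewrite Hends; apply Rle_minus.
  apply (le_of_deriv_within_nonpos phi (fun t => sumR Ev (fun j => sgn (x j - y j) *
           sumR Ev (fun e => da j (line y (fun e => x e - y e) t) pi e * (x e - y e))))); [lra| |].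
  - intros t Ht; apply sum_sgn_metzler_nonpos.
    + intros j e Hj He Hje; apply Hcoop; auto.
    + intros e He; apply jacobian_column_sum_zero; auto.
  - intros t Ht; apply deriv_within_sumR; intros j Hj; apply deriv_within_scal.
    exact (deriv_within_along_line j y _ _ t Hj Ht Hseg).
Qed.

End CooperativeSimplexMap.

Lemma in_out_edges E v e : In e (out_edges E v) <-> In e E /\ fst e = v.
Proof. unfold out_edges; rewrite filter_In, Nat.eqb_eq; reflexivity. Qed.

Lemma out_edges_incl E v e : In e (out_edges E v) -> In e E.
Proof. intros He; apply in_out_edges in He; apply He. Qed.

Lemma dpath_tail_ge n E u x p :
  network n E -> dpath E u x p -> forall e, In e p -> (u <= fst e)%nat.
Proof.
  intros [_ [Hinc _]] Hp; induction Hp as [|u w x p Huw Hp IH]; intros e He; [destruct He|].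
  destruct He as [<- | He]; [simpl; lia|].
  specialize (IH e He); destruct (Hinc u w Huw); lia.
Qed.

(* Tails strictly increase along a path, so it uses exactly one link leaving its source. *)
Lemma sumR_out_edges_on_path n E u x p c :
  network n E -> dpath E u x p -> u <> x ->
  sumR (out_edges E u) (fun e => if existsb (edge_eqb e) p then c else 0) = c.
Proof.
  intros Hnet Hp Hux; inversion Hp as [|? w ? p0 Huw Hp0]; subst; [contradiction|].
  rewrite (sumR_ext _ _ (fun e => if edge_eqb e (u, w) then c else 0)).
  - apply sumR_indicator; [exact edge_eqb_spec | apply NoDup_filter, (proj1 Hnet) |].
    apply in_out_edges; split; [exact Huw | reflexivity].
  - intros e He; apply in_out_edges in He; simpl.
    destruct (edge_eqb e (u, w)); [reflexivity|]; simpl.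
    destruct (existsb (edge_eqb e) p0) eqn:Ex; [exfalso|reflexivity].
    apply existsb_exists in Ex; destruct Ex as [e' [He' Hee']]; apply edge_eqb_spec in Hee'; subst e'.
    pose proof (dpath_tail_ge n E w x p0 Hnet Hp0 e He').
    destruct Hnet as [_ [Hinc _]]; destruct (Hinc u w Huw); lia.
Qed.

Lemma flow_out_of_source n E C Ps pi : network n E -> (0 < n)%nat -> paths_enum n E Ps ->
  in_Pi E C Ps pi -> sumR (out_edges E 0) (flow Ps pi) = 1.
Proof.
  intros Hnet Hn [_ HPs] [_ [_ [Hpi1 _]]]; rewrite <- Hpi1; unfold flow.
  rewrite sumR_comm; apply sumR_ext; intros p Hp.
  apply (sumR_out_edges_on_path n E 0 n); [exact Hnet | apply HPs, Hp | lia].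
Qed.

Lemma flow_in_Fv E C Ps v pi : in_Pi E C Ps pi -> in_Fv E C v (flow Ps pi).
Proof.
  intros Hpi e He; split.
  - destruct Hpi as [_ [Hpos _]]; unfold flow; apply sumR_nonneg; intros p Hp.
    destruct (existsb _ _); [apply Hpos, Hp | lra].
  - apply (proj2 (proj2 (proj2 Hpi))), (out_edges_incl E v), He.
Qed.

Lemma in_Fv_segment E C v x y t : in_Fv E C v x -> in_Fv E C v y -> 0 <= t <= 1 ->
  in_Fv E C v (line y (fun e => x e - y e) t).
Proof.
  intros Hx Hy Ht e He; destruct (Hx e He) as [Hx0 Hxc], (Hy e He) as [Hy0 Hyc]; unfold line.
  replace (y e + t * (x e - y e)) with ((1 - t) * y e + t * x e) by ring.
  split; [nra|]; destruct (C e) as [c|]; simpl in *; [|exact I].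
  destruct (Req_dec t 0) as [-> | Ht0]; nra.
Qed.

Lemma in_Fv_bump E C v f e : in_Fv E C v f -> In e (out_edges E v) ->
  exists s0, 0 < s0 /\ forall s, 0 <= s <= s0 -> in_Fv E C v (line f (unit_vec e) s).
Proof.
  intros Hf He; destruct (Hf e He) as [Hf0 Hfc].
  exists (match C e with Some c => (c - f e) / 2 | None => 1 end); split.
  { destruct (C e); simpl in Hfc; lra. }
  intros s Hs e' He'; destruct (Hf e' He') as [Hf'0 Hf'c]; unfold line, unit_vec.
  destruct (edge_eqb e' e) eqn:Ee.
  - apply edge_eqb_spec in Ee; subst e'; split; [lra|].
    destruct (C e); simpl in *; lra.
  - rewrite Rmult_0_r, Rplus_0_r; split; assumption.
Qed.

Lemma G_sgn_increment_nonpos n E C Ps G v pi f y :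
  network n E -> G_simplex n E C Ps G -> G_C1_coop n E C Ps G -> (v < n)%nat ->
  in_Pi E C Ps pi -> in_Fv E C v f -> in_Fv E C v y ->
  sumR (out_edges E v) (fun e => sgn (f e - y e) * (G v f pi e - G v y pi e)) <= 0.
Proof.
  intros Hnet Hsimp Hcoop Hv Hpi Hf Hy; destruct (Hcoop v Hv) as [da [db [HC1 Hoff]]].
  apply (sum_sgn_increment_nonpos (out_edges E v) Ps (fun g p => in_Fv E C v g /\ in_Pi E C Ps p)
           (fun j g p => G v g p j) da db pi HC1).
  - apply NoDup_filter, (proj1 Hnet).
  - intros g [Hg Hp]; apply (Hsimp v Hv g pi Hg Hp).
  - intros g e [Hg _] He; destruct (in_Fv_bump E C v g e Hg He) as [s0 [Hs0 Hb]].
    exists s0; split; [exact Hs0|]; intros s Hs; split; [apply Hb, Hs | exact Hpi].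
  - intros j e g Hj He Hje [Hg _]; apply Hoff; assumption.
  - intros t Ht; split; [apply in_Fv_segment; assumption | exact Hpi].
Qed.

Lemma sum_sgn_affine_le {A : Type} (l : list A) (f y gf gy : A -> R) lm lp :
  0 <= lm -> (forall e, In e l -> 0 <= gy e) -> sumR l gy = 1 ->
  (forall e, In e l -> y e = lp * gy e) ->
  sumR l (fun e => sgn (f e - y e) * (gf e - gy e)) <= 0 ->
  sumR l (fun e => sgn (f e - y e) * (lm * gf e - f e))
    <= - sumR l (fun e => Rabs (f e - y e)) + Rabs (lp - lm).
Proof.
  intros Hlm Hgy0 Hgy1 Hy Hg.
  rewrite (sumR_ext _ _ (fun e => lm * (sgn (f e - y e) * (gf e - gy e))
             + (lm - lp) * (sgn (f e - y e) * gy e) - sgn (f e - y e) * (f e - y e)))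
    by (intros e He; set (s := sgn (f e - y e)); rewrite (Hy e He); ring).
  rewrite sumR_minus, sumR_plus, !sumR_scal.
  rewrite (sumR_ext _ (fun e => sgn (f e - y e) * (f e - y e)) (fun e => Rabs (f e - y e)))
    by (intros; apply sgn_mul_self).
  assert (Hs : Rabs (sumR l (fun e => sgn (f e - y e) * gy e)) <= 1).
  { rewrite <- Hgy1; eapply Rle_trans; [apply Rabs_sumR_le|]; apply sumR_le; intros e He.
    rewrite Rabs_mult, (Rabs_right (gy e)) by (apply Rle_ge, Hgy0, He).
    pose proof (Rabs_sgn_le_1 (f e - y e)); pose proof (Hgy0 e He); nra. }
  assert ((lm - lp) * sumR l (fun e => sgn (f e - y e) * gy e) <= Rabs (lp - lm)).
  { rewrite Rabs_minus_sym; eapply Rle_trans; [apply Rle_abs|]; rewrite Rabs_mult.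
    pose proof (Rabs_pos (lm - lp)); nra. }
  assert (lm * sumR l (fun e => sgn (f e - y e) * (gf e - gy e)) <= 0) by nra.
  lra.
Qed.

Theorem lemma2 (n : nat) (E : list edge) (C : edge -> option R) (Ps : list path)
    (G : Gmap)
    (Hnet : network n E) (Hcap : cap_pos E C) (HPs : paths_enum n E Ps)
    (Hloc : G_local n E G) (Hsimp : G_simplex n E C Ps G)
    (Hcons : G_consistent n E C Ps G) (Hcoop : G_C1_coop n E C Ps G) :
  forall v, (v < n)%nat ->
  forall pi, in_Pi E C Ps pi ->
  forall f, in_F E C f ->
    sumR (out_edges E v) (fun e => sgn (f e - flow Ps pi e) * H E G v f pi e)
      <= - Vplus E Ps v f pi + Vminus E Ps v f pi.
Proof.
  intros v Hv pi Hpi f Hf.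
  assert (HfV : in_Fv E C v f) by (intros e He; apply Hf, (out_edges_incl E v), He).
  pose proof (flow_in_Fv E C Ps v pi Hpi) as HyV.
  destruct (Hsimp v Hv _ pi HyV Hpi) as [Gy0 Gy1].
  pose proof (G_sgn_increment_nonpos n E C Ps G v pi f _ Hnet Hsimp Hcoop Hv Hpi HfV HyV) as Hcontr.
  assert (Hy : forall e, In e (out_edges E v) ->
             flow Ps pi e = sumR (out_edges E v) (flow Ps pi) * G v (flow Ps pi) pi e)
    by (intros e He; symmetry; apply Hcons; assumption).
  unfold H, Vplus, Vminus; destruct (Nat.eqb_spec v 0) as [-> | Hv0].
  - rewrite (flow_out_of_source n E C Ps pi Hnet Hv HPs Hpi) in Hy.
    rewrite (sumR_ext _ _ (fun e => sgn (f e - flow Ps pi e) * (1 * G 0%nat f pi e - f e)))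
      by (intros; ring).
    replace 0 with (Rabs (1 - 1)) by (rewrite Rminus_diag; apply Rabs_R0).
    apply (sum_sgn_affine_le _ _ _ _ (G 0%nat (flow Ps pi) pi)); auto; lra.
  - apply (sum_sgn_affine_le _ _ _ _ (G v (flow Ps pi) pi)); auto.
    apply sumR_nonneg; intros e He; apply Hf.
    unfold in_edges in He; apply filter_In in He; tauto.
Qed.
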